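(* Let $\mathbf{A}\in\mathbb{R}^{n\times d}$ be nonzero, and for $\ell\in[m]$ let $\mathbf{r}^{(\ell)}\in\{-1,1\}^n$ and $\boldsymbol{\Omega}^{(\ell)}=\operatorname{diag}(\mathbf{r}^{(\ell)})$. Let $$\mathbf{P}=\big[\mathbf{A}^\top\boldsymbol{\Omega}^{(1)}\,|\,\cdots\,|\,\mathbf{A}^\top\boldsymbol{\Omega}^{(m)}\big]^\top\in\mathbb{R}^{mn\times d}$$ be the constraint matrix of the one-bit polyhedron associated with $\mathbf{A}\mathbf{x}=\mathbf{y}$. Then $\kappa(\mathbf{P})=\kappa(\mathbf{A})$.
   Context: Scaled condition number $\kappa(\mathbf{C})=\|\mathbf{C}\|_{\mathrm F}\|\mathbf{C}^\dagger\|_2$ ($\mathbf{C}^\dagger$ the Moore–Penrose pseudoinverse, $\|\cdot\|_2$ the spectral norm). *)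

From HB Require Import structures.
From Stdlib Require Import ClassicalEpsilon.
From mathcomp Require Import all_boot all_order all_algebra.
From mathcomp Require Import all_classical all_reals.
Set Implicit Arguments. Unset Strict Implicit. Unset Printing Implicit Defensive.
Import Order.TTheory GRing.Theory Num.Theory.
Local Open Scope ring_scope.
Local Open Scope classical_set_scope.

Definition frob_norm (R : realType) (p q : nat) (C : 'M[R]_(p, q)) : R :=
  Num.sqrt (\sum_(i < p) \sum_(j < q) C i j ^+ 2).

Definition vnorm2 (R : realType) (q : nat) (x : 'cV[R]_q) : R :=
  Num.sqrt (\sum_(i < q) x i 0 ^+ 2).

Definition spec_norm (R : realType) (p q : nat) (C : 'M[R]_(p, q)) : R :=
  sup [set vnorm2 (C *m x) | x in [set x : 'cV[R]_q | vnorm2 x = 1]].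

Definition is_pinv (R : realType) (p q : nat) (C : 'M[R]_(p, q)) (X : 'M[R]_(q, p)) : Prop :=
  [/\ C *m X *m C = C, X *m C *m X = X, (C *m X)^T = C *m X & (X *m C)^T = X *m C].

Definition pinv (R : realType) (p q : nat) (C : 'M[R]_(p, q)) : 'M[R]_(q, p) :=
  epsilon (inhabits 0) (is_pinv C).

Definition kappa (R : realType) (p q : nat) (C : 'M[R]_(p, q)) : R :=
  frob_norm C * spec_norm (pinv C).

Definition onebit_P (R : realType) (n d m : nat) (A : 'M[R]_(n, d))
  (r : 'I_m -> 'rV[R]_n) : 'M[R]_(\sum_(l < m) n, d) :=
  \mxcol_(l < m) (A^T *m diag_mx (r l))^T.

(* Stacking the sign matrices gives P = S A with S = col(diag r^(1), ..., diag r^(m)),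
   and S^T S = m I because each diag(r^(l)) squares to the identity. Hence
   ||P||_F = sqrt m ||A||_F, P^+ = A^+ S^T / m, and right multiplication by
   S^T / m scales spectral norms by 1 / sqrt m; the two factors cancel in kappa. *)

From HB Require Import structures.
From Stdlib Require Import ClassicalEpsilon.
From mathcomp Require Import all_boot all_order all_algebra.
From mathcomp Require Import all_classical all_reals.
Set Implicit Arguments. Unset Strict Implicit. Unset Printing Implicit Defensive.
Import Order.TTheory GRing.Theory Num.Theory.
Local Open Scope ring_scope.

Section SquaredNorm.
Variable R : realType.

Definition sqnorm q (x : 'cV[R]_q) : R := (x^T *m x) 0 0.

Lemma sqnormE q (x : 'cV[R]_q) : sqnorm x = \sum_i x i 0 ^+ 2.
Proof. by rewrite /sqnorm mxE; apply: eq_bigr => i _; rewrite mxE expr2. Qed.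

Lemma sqnorm_ge0 q (x : 'cV[R]_q) : 0 <= sqnorm x.
Proof. by rewrite sqnormE; apply: sumr_ge0 => i _; rewrite sqr_ge0. Qed.

Lemma sqnorm_eq0 q (x : 'cV[R]_q) : (sqnorm x == 0) = (x == 0).
Proof.
apply/idP/eqP => [|->]; last by rewrite /sqnorm mulmx0 mxE.
rewrite sqnormE psumr_eq0 => [/allP x0|i _]; last exact: sqr_ge0.
apply/matrixP => i j; rewrite ord1 mxE.
by have /implyP/(_ isT) := x0 i (mem_index_enum _); rewrite sqrf_eq0 => /eqP.
Qed.

Lemma sqnormZ q k (x : 'cV[R]_q) : sqnorm (k *: x) = k ^+ 2 * sqnorm x.
Proof.
by rewrite !sqnormE mulr_sumr; apply: eq_bigr => i _; rewrite mxE exprMn.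
Qed.

Lemma sqnormD q (x y : 'cV[R]_q) :
  x^T *m y = 0 -> sqnorm (x + y) = sqnorm x + sqnorm y.
Proof.
move=> xy0; have yx0 : y^T *m x = 0 by rewrite -[x]trmxK -trmx_mul xy0 trmx0.
by rewrite /sqnorm !linearD /= !mulmxDl xy0 yx0 addr0 add0r mxE.
Qed.

Lemma vnorm2E q (x : 'cV[R]_q) : vnorm2 x = Num.sqrt (sqnorm x).
Proof. by rewrite sqnormE. Qed.

Lemma vnorm2_ge0 q (x : 'cV[R]_q) : 0 <= vnorm2 x.
Proof. exact: sqrtr_ge0. Qed.

Lemma vnorm2_gt0 q (x : 'cV[R]_q) : (0 < vnorm2 x) = (x != 0).
Proof. by rewrite vnorm2E sqrtr_gt0 lt_def sqnorm_ge0 sqnorm_eq0 andbT. Qed.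

Lemma vnorm2Z q k (x : 'cV[R]_q) : vnorm2 (k *: x) = `|k| * vnorm2 x.
Proof. by rewrite !vnorm2E sqnormZ sqrtrM ?sqr_ge0 // sqrtr_sqr. Qed.

Lemma vnorm2_eq1 q (x : 'cV[R]_q) : vnorm2 x = 1 -> sqnorm x = 1.
Proof. by move=> x1; rewrite -[sqnorm x]sqr_sqrtr ?sqnorm_ge0 // -vnorm2E x1 expr1n. Qed.

Lemma vnorm2_normalize q (x : 'cV[R]_q) :
  x != 0 -> vnorm2 ((vnorm2 x)^-1 *: x) = 1.
Proof.
rewrite -vnorm2_gt0 => x0.
by rewrite vnorm2Z ger0_norm ?invr_ge0 ?vnorm2_ge0 // mulVf ?gt_eqF.
Qed.

Lemma exists_vnorm2_eq1 q : (0 < q)%N -> exists x : 'cV[R]_q, vnorm2 x = 1.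
Proof.
case: q => // q _; pose e : 'cV[R]_q.+1 := delta_mx 0 0.
have e_neq0 : e != 0.
  by apply/eqP => /matrixP/(_ 0 0); rewrite !mxE eqxx; apply/eqP; rewrite oner_eq0.
by exists ((vnorm2 e)^-1 *: e); apply: vnorm2_normalize.
Qed.

End SquaredNorm.

Section PseudoInverse.
Variable R : realType.

Lemma is_pinv_uniq p q (C : 'M[R]_(p, q)) X Y : is_pinv C X -> is_pinv C Y -> X = Y.
Proof.
case=> [CXC XCX CX_sym XC_sym] [CYC YCY CY_sym YC_sym].
have XE : X = X *m C *m Y.
  transitivity (X *m (C *m X)^T *m (C *m Y)^T); last by rewrite CX_sym CY_sym !mulmxA XCX.
  rewrite !trmx_mul.
  have -> : X *m (X^T *m C^T) *m (Y^T *m C^T) = X *m X^T *m (C *m Y *m C)^T.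
    by rewrite !trmx_mul !mulmxA.
  by rewrite CYC -mulmxA -trmx_mul CX_sym mulmxA XCX.
have YE : Y = X *m C *m Y.
  transitivity ((X *m C)^T *m (Y *m C)^T *m Y); last first.
    by rewrite XC_sym YC_sym -[in RHS]YCY !mulmxA.
  rewrite !trmx_mul.
  have -> : C^T *m X^T *m (C^T *m Y^T) *m Y = (C *m X *m C)^T *m Y^T *m Y.
    by rewrite !trmx_mul !mulmxA.
  by rewrite CXC -trmx_mul YC_sym YCY.
by rewrite XE -YE.
Qed.

Lemma gram_unitmx p q (B : 'M[R]_(p, q)) : row_free B^T -> B^T *m B \in unitmx.
Proof.
move=> B_free; rewrite -row_free_unit; apply: inj_row_free => v vBB0.
have vB0 : v *m B^T = 0.
  apply: trmx_inj; rewrite trmx0; apply/eqP; rewrite -sqnorm_eq0 /sqnorm trmxK.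
  by rewrite trmx_mul trmxK mulmxA -(mulmxA v) vBB0 mul0mx mxE.
by apply: (row_free_inj B_free); rewrite vB0 mul0mx.
Qed.

(* (B K)^+ = K^+ B^+, with K^+ = K^T (K K^T)^-1 and B^+ = (B^T B)^-1 B^T. *)
Lemma is_pinv_full_rank_factor p k q (B : 'M[R]_(p, k)) (K : 'M[R]_(k, q)) :
  B^T *m B \in unitmx -> K *m K^T \in unitmx ->
  is_pinv (B *m K) (K^T *m invmx (K *m K^T) *m invmx (B^T *m B) *m B^T).
Proof.
move=> BB_unit KK_unit; set X := K^T *m _ *m _ *m _.
have inv_sym (M : 'M[R]_k) : M^T = M -> (invmx M)^T = invmx M.
  by move=> M_sym; rewrite trmx_inv M_sym.
have BBsym : (B^T *m B)^T = B^T *m B by rewrite trmx_mul trmxK.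
have KKsym : (K *m K^T)^T = K *m K^T by rewrite trmx_mul trmxK.
have CXE : B *m K *m X = B *m invmx (B^T *m B) *m B^T.
  by rewrite /X -!mulmxA (mulmxA K) (mulmxA (K *m K^T)) mulmxV // mul1mx.
have XCE : X *m (B *m K) = K^T *m invmx (K *m K^T) *m K.
  by rewrite /X !mulmxA -(mulmxA _ B^T) -(mulmxA _ (invmx (B^T *m B))) mulVmx // mulmx1.
split.
- by rewrite CXE -!mulmxA (mulmxA B^T) (mulmxA (invmx (B^T *m B))) mulVmx // mul1mx.
- by rewrite XCE /X -!mulmxA (mulmxA K) (mulmxA (K *m K^T)) mulmxV // mul1mx.
- by rewrite CXE !trmx_mul trmxK inv_sym // mulmxA.
- by rewrite XCE !trmx_mul trmxK inv_sym // mulmxA.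
Qed.

Lemma exists_pinv p q (C : 'M[R]_(p, q)) : exists X, is_pinv C X.
Proof.
have colB_free : row_free (col_base C)^T.
  by rewrite /row_free mxrank_tr; exact: col_base_full.
have rowB_free : row_free ((row_base C)^T)^T by rewrite trmxK row_base_free.
have := gram_unitmx rowB_free; rewrite trmxK.
move=> /(is_pinv_full_rank_factor (gram_unitmx colB_free)).
by rewrite mulmx_base; exact: ex_intro.
Qed.

Lemma pinvP p q (C : 'M[R]_(p, q)) : is_pinv C (pinv C).
Proof. by apply: epsilon_spec; exact: exists_pinv. Qed.

Lemma pinvE p q (C : 'M[R]_(p, q)) X : is_pinv C X -> pinv C = X.
Proof. exact/is_pinv_uniq/pinvP. Qed.

End PseudoInverse.

Lemma frob_normE (R : realType) p q (C : 'M[R]_(p, q)) :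
  frob_norm C = Num.sqrt (\tr (C^T *m C)).
Proof.
rewrite /frob_norm /mxtrace exchange_big; congr Num.sqrt.
by apply: eq_bigr => j _; rewrite mxE; apply: eq_bigr => i _; rewrite !mxE expr2.
Qed.

Section SpectralNorm.
Variable R : realType.

Lemma spec_norm_has_ub p q (X : 'M[R]_(p, q)) :
  exists b, forall x, vnorm2 x = 1 -> vnorm2 (X *m x) <= b.
Proof.
exists (Num.sqrt (\sum_i (\sum_j `|X i j|) ^+ 2)) => x /vnorm2_eq1 x1.
have xj_le1 j : `|x j 0| <= 1.
  have : x j 0 ^+ 2 <= 1.
    by rewrite -x1 sqnormE (bigD1 j) //= lerDl sumr_ge0 // => i _; rewrite sqr_ge0.
  by move=> xj2_le1; rewrite -(expr_le1 (n := 2)) // real_normK ?num_real.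
rewrite vnorm2E sqnormE ler_sqrt ?sumr_ge0 // => [|i _]; last exact: sqr_ge0.
apply: ler_sum => i _; rewrite -real_normK ?num_real //.
apply: lerXn2r; rewrite ?nnegrE ?sumr_ge0 // mxE.
apply: le_trans (ler_norm_sum _ _ _) _; apply: ler_sum => j _.
by rewrite normrM ler_piMr.
Qed.

Lemma vnorm2_le_spec_norm p q (X : 'M[R]_(p, q)) x :
  vnorm2 x = 1 -> vnorm2 (X *m x) <= spec_norm X.
Proof.
move=> x1; have [b Xb] := spec_norm_has_ub X.
apply: sup_upper_bound; last by exists x.
by split; [exists (vnorm2 (X *m x)), x | exists b => _ [y /Xb ? <-]].
Qed.

Lemma vnorm2_mul_le p q (X : 'M[R]_(p, q)) x :
  vnorm2 (X *m x) <= spec_norm X * vnorm2 x.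
Proof.
have [->|x_neq0] := eqVneq x 0.
  by rewrite mulmx0 !vnorm2E /sqnorm !mulmx0 mxE sqrtr0 mulr0.
have x_gt0 : 0 < vnorm2 x by rewrite vnorm2_gt0.
rewrite -[x in X *m x](scalerKV (lt0r_neq0 x_gt0)) -scalemxAr.
rewrite vnorm2Z ger0_norm ?vnorm2_ge0 // [leRHS]mulrC ler_pM2l //.
exact/vnorm2_le_spec_norm/vnorm2_normalize.
Qed.

Lemma spec_norm_ge0 p q (X : 'M[R]_(p, q)) : (0 < q)%N -> 0 <= spec_norm X.
Proof.
move=> q_gt0; have [x x1] := exists_vnorm2_eq1 R q_gt0.
exact: le_trans (vnorm2_ge0 _) (vnorm2_le_spec_norm X x1).
Qed.

Lemma spec_norm_le p q (X : 'M[R]_(p, q)) b : (0 < q)%N ->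
  (forall x, vnorm2 x = 1 -> vnorm2 (X *m x) <= b) -> spec_norm X <= b.
Proof.
move=> q_gt0 Xb; have [x x1] := exists_vnorm2_eq1 R q_gt0.
by apply: ge_sup; [exists (vnorm2 (X *m x)), x | move=> _ [y /Xb ? <-]].
Qed.

End SpectralNorm.

Section ScaledIsometry.
Variables (R : realType) (N n : nat) (S : 'M[R]_(N, n)) (c : R).
Hypothesis trSS : S^T *m S = c%:M.

Lemma sqnorm_mul x : sqnorm (S *m x) = c * sqnorm x.
Proof.
by rewrite /sqnorm trmx_mul mulmxA -(mulmxA x^T) trSS mul_mx_scalar -scalemxAl mxE.
Qed.

Lemma vnorm2_mul x : 0 <= c -> vnorm2 (S *m x) = Num.sqrt c * vnorm2 x.
Proof. by move=> c0; rewrite !vnorm2E sqnorm_mul sqrtrM. Qed.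

(* S (S^T y) / c is the orthogonal projection of y onto the range of S. *)
Lemma sqnorm_tr_mul_le y : 0 < c -> sqnorm (S^T *m y) <= c * sqnorm y.
Proof.
move=> c_gt0; set w := c^-1 *: (S^T *m y).
have orth : (S *m w)^T *m (y - S *m w) = 0.
  rewrite trmx_mul -mulmxA mulmxBr mulmxA trSS /w -scalemxAr mul_scalar_mx.
  by rewrite scalerA mulVf ?gt_eqF // scale1r subrr mulmx0.
have : sqnorm (S *m w) <= sqnorm y.
  by rewrite -[y in leRHS](subrK (S *m w)) addrC sqnormD // lerDl sqnorm_ge0.
rewrite sqnorm_mul sqnormZ mulrA expr2 mulrA mulfV ?gt_eqF // mul1r.
by rewrite ler_pdivrMl.
Qed.

Lemma vnorm2_tr_mul_le y : 0 < c -> vnorm2 (S^T *m y) <= Num.sqrt c * vnorm2 y.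
Proof.
move=> c_gt0; have c_ge0 := ltW c_gt0.
rewrite !vnorm2E -sqrtrM // ler_sqrt ?mulr_ge0 ?sqnorm_ge0 //.
exact: sqnorm_tr_mul_le.
Qed.

Lemma scaled_isometry_rows_gt0 : 0 < c -> (0 < n)%N -> (0 < N)%N.
Proof.
move=> c_gt0 n_gt0; case: N S trSS => // S0.
rewrite flatmx0 mulmx0 => /(congr1 mxtrace).
rewrite mxtrace0 mxtrace_scalar => /esym/eqP.
by rewrite mulrn_eq0 (gt_eqF c_gt0) orbF eqn0Ngt n_gt0.
Qed.

Lemma spec_norm_mul_tr p (X : 'M[R]_(p, n)) : 0 < c -> (0 < n)%N ->
  spec_norm (X *m S^T) = Num.sqrt c * spec_norm X.
Proof.
move=> c_gt0 n_gt0; have c_ge0 := ltW c_gt0.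
have sc_gt0 : 0 < Num.sqrt c by rewrite sqrtr_gt0.
have N_gt0 := scaled_isometry_rows_gt0 c_gt0 n_gt0.
apply/eqP; rewrite eq_le; apply/andP; split.
  apply: spec_norm_le N_gt0 _ => y y1.
  rewrite -mulmxA; apply: le_trans (vnorm2_mul_le _ _) _.
  rewrite mulrC ler_wpM2r ?spec_norm_ge0 //.
  by have := vnorm2_tr_mul_le y c_gt0; rewrite y1 mulr1.
rewrite mulrC -ler_pdivlMr //; apply: spec_norm_le n_gt0 _ => x x1.
have -> : X *m x = X *m S^T *m (c^-1 *: (S *m x)).
  rewrite -scalemxAr -mulmxA (mulmxA S^T) trSS mul_scalar_mx -scalemxAr scalerA.
  by rewrite mulVf ?gt_eqF ?scale1r.
apply: le_trans (vnorm2_mul_le _ _) _; rewrite ler_wpM2l ?spec_norm_ge0 //.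
rewrite vnorm2Z vnorm2_mul // x1 mulr1 ger0_norm ?invr_ge0 //.
by rewrite -[c in c^-1](sqr_sqrtr c_ge0) expr2 invfM mulfVK ?lt0r_neq0.
Qed.

Lemma is_pinv_mul d (A : 'M[R]_(n, d)) X : c != 0 ->
  is_pinv A X -> is_pinv (S *m A) (X *m (c^-1 *: S)^T).
Proof.
move=> c_neq0 [AXA XAX AX_sym XA_sym]; rewrite linearZ /=.
have CXE : S *m A *m (X *m (c^-1 *: S^T)) = c^-1 *: (S *m (A *m X) *m S^T).
  by rewrite scalemxAr !mulmxA.
have XCE : X *m (c^-1 *: S^T) *m (S *m A) = X *m A.
  rewrite -scalemxAr -scalemxAl !mulmxA -(mulmxA X) trSS mul_mx_scalar.
  by rewrite -scalemxAl scalerA mulVf // scale1r.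
split.
- rewrite CXE -scalemxAl !mulmxA -(mulmxA _ S^T S) trSS mul_mx_scalar.
  by rewrite -!scalemxAl scalerA mulVf // scale1r -!mulmxA (mulmxA A) AXA.
- by rewrite XCE mulmxA XAX.
- by rewrite CXE linearZ /= !trmx_mul trmxK -trmx_mul AX_sym !mulmxA.
- by rewrite XCE.
Qed.

Lemma frob_norm_mul d (A : 'M[R]_(n, d)) : 0 <= c ->
  frob_norm (S *m A) = Num.sqrt c * frob_norm A.
Proof.
move=> c_ge0; rewrite !frob_normE -sqrtrM ?mxtrace_ge0 //; congr Num.sqrt.
by rewrite trmx_mul mulmxA -(mulmxA A^T) trSS mul_mx_scalar -scalemxAl mxtraceZ.
Qed.

End ScaledIsometry.

Lemma kappa_mul (R : realType) N n d (S : 'M[R]_(N, n)) c (A : 'M[R]_(n, d)) :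
  0 < c -> S^T *m S = c%:M -> (0 < n)%N -> kappa (S *m A) = kappa A.
Proof.
move=> c_gt0 trSS n_gt0; have c_ge0 := ltW c_gt0.
have trSS' : (c^-1 *: S)^T *m (c^-1 *: S) = c^-1%:M.
  rewrite [(_ *: S)^T]linearZ /= -scalemxAl -scalemxAr trSS scalerA scale_scalar_mx.
  by rewrite mulfVK ?lt0r_neq0.
have SA_pinv := is_pinv_mul trSS (lt0r_neq0 c_gt0) (pinvP A).
rewrite /kappa (frob_norm_mul trSS) // (pinvE SA_pinv).
rewrite (spec_norm_mul_tr trSS') ?invr_gt0 // mulrCA !mulrA -sqrtrM ?invr_ge0 //.
by rewrite mulVf ?lt0r_neq0 // sqrtr1 mul1r.
Qed.

Definition sign_stack (R : realType) n m (r : 'I_m -> 'rV[R]_n) :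
  'M[R]_(\sum_(l < m) n, n) :=
  \mxcol_(l < m) diag_mx (r l).

Lemma onebit_PE (R : realType) n d m (A : 'M[R]_(n, d)) (r : 'I_m -> 'rV[R]_n) :
  onebit_P A r = sign_stack r *m A.
Proof.
rewrite /onebit_P /sign_stack mxcol_mul; apply: eq_mxcol => l.
by rewrite trmx_mul trmxK tr_diag_mx.
Qed.

Lemma trmx_sign_stack_mul (R : realType) n m (r : 'I_m -> 'rV[R]_n) :
  (forall l i, r l 0 i ^+ 2 = 1) -> (sign_stack r)^T *m sign_stack r = m%:R%:M.
Proof.
move=> r_sq1; rewrite /sign_stack tr_mxcol mul_mxrow_mxcol.
rewrite (eq_bigr (fun=> 1%:M)) => [|l _]; first by rewrite sumr_const card_ord -raddfMn.
rewrite tr_diag_mx mulmx_diag -diag_const_mx; congr diag_mx.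
by apply/matrixP => i j; rewrite !mxE -expr2 r_sq1.
Qed.

Theorem theorem8 (R : realType) (n d m : nat) (A : 'M[R]_(n, d))
  (r : 'I_m -> 'rV[R]_n) :
  A != 0 -> (0 < m)%N ->
  (forall (l : 'I_m) (i : 'I_n), r l 0 i = 1 \/ r l 0 i = -1) ->
  kappa (onebit_P A r) = kappa A.
Proof.
move=> A_neq0 m_gt0 r_sign.
have n_gt0 : (0 < n)%N by case: n A r r_sign A_neq0 => // A _ _; rewrite flatmx0 eqxx.
have r_sq1 l i : r l 0 i ^+ 2 = 1 by case: (r_sign l i) => ->; rewrite ?sqrrN expr1n.
by rewrite onebit_PE (kappa_mul A _ (trmx_sign_stack_mul r_sq1)) ?ltr0n.
Qed.
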